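(* Let $d\ge 3$, let $A$ be a $d$-dimensional $(0,1)$-matrix of order $4$ equivalent to $\mathcal{M}_4^d$, and let $C$ be a filled subcube of $A$. Let $B$ be the $(0,1)$-matrix obtained from $A$ by changing exactly one zero entry lying in $C$ to $1$. Then $\operatorname{per}B>0$.
   Context: $\mathcal{M}_4^d$ has entry $1$ at $\alpha$ iff $\alpha_1+\dots+\alpha_d\equiv 0\pmod 4$, else $0$. Equivalence of matrices: obtained by permuting coordinate positions and/or applying a permutation of $\{0,1,2,3\}$ to a single coordinate, repeatedly. A diagonal is a set of $4$ indices any two of which differ in every coordinate; $\operatorname{per}B=\sum_p\prod_{\alpha\in p}b_\alpha$ over diagonals. Define $p_1,p_2,p_3:\{0,1,2,3\}\to\{0,1\}$ by $p_1(0)=p_1(1)=0,\ p_1(2)=p_1(3)=1$; $p_2(0)=p_2(2)=0,\ p_2(1)=p_2(3)=1$; $p_3(0)=p_3(3)=0,\ p_3(1)=p_3(2)=1$; and $\mu_1(0)=\mu_1(2)=0,\ \mu_1(1)=\mu_1(3)=1$; $\mu_2(0)=\mu_2(1)=0,\ \mu_2(2)=\mu_2(3)=1$; $\mu_3(0)=\mu_3(2)=0,\ \mu_3(1)=\mu_3(3)=1$. $Q_s^d=\{y\in\{0,1\}^d:w(y)\equiv s \pmod 2\}$ ($w$ = Hamming weight). For $\mathcal{E}\in\{1,2,3\}^d$, $s\in\{0,1\}$, $\lambda:Q_s^d\to\{0,1\}$, the block permutation with parameters $(\mathcal{E},\lambda,s)$ is the $(0,1)$-matrix with entry $1$ at $\alpha$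 iff $\bigoplus_i p_{\varepsilon_i}(\alpha_i)=s$ and $\bigoplus_i\mu_{\varepsilon_i}(\alpha_i)\oplus\lambda(p_{\varepsilon_1}(\alpha_1),\dots,p_{\varepsilon_d}(\alpha_d))=0$. Every matrix equivalent to $\mathcal{M}_4^d$ ($d\ge3$) is a block permutation for a unique triple of parameters $(\mathcal{E},\lambda,s)$. For these parameters, the subcubes are the index sets $C_y=\{\alpha:p_{\varepsilon_i}(\alpha_i)=y_i\ \forall i\}$, $y\in\{0,1\}^d$, and $C_y$ is called filled if $w(y)\equiv s\pmod 2$. *)

From mathcomp Require Import all_boot all_fingroup.
Set Implicit Arguments. Unset Strict Implicit. Unset Printing Implicit Defensive.

Definition idx (d : nat) := {ffun 'I_d -> 'I_4}.

Definition mat01 (d : nat) := idx d -> bool.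

Definition M4 (d : nat) : mat01 d :=
  fun a => (\sum_(i < d) (a i : nat)) %% 4 == 0.

Arguments M4 d : clear implicits.

Definition perm_coords d (s : {perm 'I_d}) (A : mat01 d) : mat01 d :=
  fun a => A [ffun i => a (s i)].
Definition perm_value d (i : 'I_d) (pi : {perm 'I_4}) (A : mat01 d) : mat01 d :=
  fun a => A [ffun j => if j == i then pi (a j) else a j].

Inductive equiv_mat d : mat01 d -> mat01 d -> Prop :=
| equiv_refl A : equiv_mat A A
| equiv_coords A B s : equiv_mat A B -> equiv_mat A (perm_coords s B)
| equiv_value A B i pi : equiv_mat A B -> equiv_mat A (perm_value i pi B).

Definition is_diagonal d (p : {set idx d}) : bool :=
  (#|p| == 4) &&
  [forall a in p, forall b in p, (a != b) ==> [forall i, a i != b i]].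

Definition per d (B : mat01 d) : nat :=
  \sum_(p : {set idx d} | is_diagonal p) \prod_(a in p) (B a : nat).

(* The functions p_eps and mu_eps; eps in {1,2,3} is encoded as 'I_3
   (ordinal k stands for eps = k+1). *)
Definition pf (e : 'I_3) (x : 'I_4) : bool :=
  match val e with
  | 0 => 2 <= x
  | 1 => odd x
  | _ => (x == 1 :> nat) || (x == 2 :> nat)
  end.
Definition muf (e : 'I_3) (x : 'I_4) : bool :=
  match val e with
  | 0 => odd x
  | 1 => 2 <= x
  | _ => odd x
  end.

Definition pvec d (E : {ffun 'I_d -> 'I_3}) (a : idx d) : {ffun 'I_d -> bool} :=
  [ffun i => pf (E i) (a i)].

Definition xorall d (f : 'I_d -> bool) : bool := \big[addb/false]_(i < d) f i.

Definition inQ d (s : bool) (y : {ffun 'I_d -> bool}) : bool :=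
  odd #|[set i | y i]| == s.

(* Block permutation with parameters (E, lambda, s); lambda is only ever
   evaluated on Q_s^d. *)
Definition block_perm d (E : {ffun 'I_d -> 'I_3})
  (lam : {ffun 'I_d -> bool} -> bool) (s : bool) : mat01 d :=
  fun a => (xorall (fun i => pf (E i) (a i)) == s) &&
           (xorall (fun i => muf (E i) (a i)) (+) lam (pvec E a) == false).

Definition subcube d (E : {ffun 'I_d -> 'I_3}) (y : {ffun 'I_d -> bool}) : pred (idx d) :=
  fun a => pvec E a == y.

From mathcomp Require Import all_boot all_fingroup zify.
Set Implicit Arguments. Unset Strict Implicit. Unset Printing Implicit Defensive.

(* Positive permanent means a diagonal of ones, and having one is invariant
   under equivalence.  For even d, M_4^d has such a diagonal, hence so does A.
   For odd d it has none, and we build one through the new entry: writing every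
   entry by its (p, mu)-coordinates relative to a0, the three other entries of
   the diagonal take, coordinatewise, the three remaining (p, mu)-shifts.  Since
   d is odd their p-shifts have even weight, so they stay in the filled layer,
   and a free mu-bit in each makes it a one.  A last bit either lets a0 itself
   complete the diagonal, or produces a diagonal of ones in A, impossible. *)

Definition apart d (a b : idx d) : bool := [forall i, a i != b i].

Definition has_ones_diagonal d (B : mat01 d) : Prop :=
  exists s : seq (idx d), [&& size s == 4, all B s & pairwise (@apart d) s].

Lemma apart_sym d : symmetric (@apart d).
Proof. by move=> a b; apply/forallP/forallP => ab i; rewrite eq_sym. Qed.

Lemma apart_irr d : 0 < d -> irreflexive (@apart d).
Proof. by move=> d_gt0 a; apply/negP => /forallP/(_ (Ordinal d_gt0)); rewrite eqxx. Qed.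

Lemma pairwise_sym_mem (T : eqType) (r : rel T) (s : seq T) x y : symmetric r ->
  pairwise r s -> x \in s -> y \in s -> x != y -> r x y.
Proof.
move=> r_sym rs xs ys; apply: contraNT => nrxy; apply/eqP.
pose r' := [rel u v | (u == v) || r u v].
have r'_refl : reflexive r' by move=> u /=; rewrite eqxx.
have r'_sym : symmetric r' by move=> u v /=; rewrite eq_sym r_sym.
have /allrelP/(_ x y xs ys) : all2rel r' s.
  by rewrite -pairwise_all2rel //; apply: sub_pairwise rs => u v /= ->; rewrite orbT.
by rewrite /= (negbTE nrxy) orbF => /eqP.
Qed.

Lemma has_ones_diagonal_mono d (A B : mat01 d) :
  (forall a, A a -> B a) -> has_ones_diagonal A -> has_ones_diagonal B.
Proof.
move=> AB [s /and3P[s4 As Ds]]; exists s; rewrite s4 Ds andbT.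
by apply/allP => a /(allP As)/AB.
Qed.

Lemma per_gt0 d (B : mat01 d) : 0 < d -> has_ones_diagonal B -> 0 < per B.
Proof.
move=> d_gt0 [s /and3P[/eqP s4 Bs Ds]].
have s_uniq : uniq s := pairwise_uniq (apart_irr d_gt0) Ds.
have p_diag : is_diagonal [set z in s].
  rewrite /is_diagonal cardsE (card_uniqP s_uniq) s4 eqxx /=.
  apply/forall_inP => u; rewrite inE => us; apply/forall_inP => v; rewrite inE => vs.
  by apply/implyP => uv; apply: pairwise_sym_mem (@apart_sym d) Ds us vs uv.
rewrite /per (bigD1 [set z in s]) //= big1 // => z.
by rewrite inE => /(allP Bs) ->.
Qed.

Lemma has_ones_diagonal_comp d (B : mat01 d) (f g : idx d -> idx d) :
  cancel f g -> cancel g f -> (forall a b, apart (f a) (f b) = apart a b) ->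
  has_ones_diagonal (fun a => B (f a)) <-> has_ones_diagonal B.
Proof.
move=> fK gK f_apart.
have map_f s : pairwise (@apart d) (map f s) = pairwise (@apart d) s.
  by rewrite pairwise_map; apply: (eq_pairwise f_apart).
split=> -[s /and3P[s4 Bs Ds]].
  by exists (map f s); rewrite size_map s4 all_map Bs map_f Ds.
have fgK : map (f \o g) s = s by apply: map_id_in => a _; exact: gK.
exists (map g s); rewrite size_map s4 -map_f -map_comp fgK Ds andbT all_map.
by rewrite (eq_all (a2 := B)) // => a; rewrite /= gK.
Qed.

Lemma has_ones_diagonal_equiv d (X Y : mat01 d) :
  equiv_mat X Y -> has_ones_diagonal X <-> has_ones_diagonal Y.
Proof.
elim=> {Y} [//| A B s _ IH | A B i pi _ IH]; rewrite IH.
  rewrite (@has_ones_diagonal_comp _ B (fun a => [ffun i => a (s i)])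
             (fun a => [ffun i => a ((s^-1)%g i)])) //.
  - by move=> a; apply/ffunP => i; rewrite !ffunE permKV.
  - by move=> a; apply/ffunP => i; rewrite !ffunE permK.
  move=> a b; apply/forallP/forallP => ab j; rewrite ?ffunE //.
  by have := ab ((s^-1)%g j); rewrite !ffunE permKV.
rewrite (@has_ones_diagonal_comp _ B
           (fun a => [ffun j => if j == i then pi (a j) else a j])
           (fun a => [ffun j => if j == i then (pi^-1)%g (a j) else a j])) //.
- by move=> a; apply/ffunP => j; rewrite !ffunE; case: eqP => // ->; rewrite permK.
- by move=> a; apply/ffunP => j; rewrite !ffunE; case: eqP => // ->; rewrite permKV.
move=> a b; apply/forallP/forallP => ab j; move: (ab j); rewrite !ffunE;
  by case: (j == i); rewrite ?(inj_eq perm_inj).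
Qed.

Lemma sum_uniq_I4 (x y z u : 'I_4) : uniq [:: x; y; z; u] -> x + y + z + u = 6.
Proof.
case: x => [[|[|[|[|?]]]] ?] //; case: y => [[|[|[|[|?]]]] ?] //;
case: z => [[|[|[|[|?]]]] ?] //; case: u => [[|[|[|[|?]]]] ?] //.
Qed.

(* Each coordinate contributes 0 + 1 + 2 + 3 to the four entry sums, so they
   add up to 6d, which is 2 mod 4 for odd d. *)
Lemma M4_odd_no_diagonal d : odd d -> ~ has_ones_diagonal (M4 d).
Proof.
move=> odd_d [[|a [|b [|c [|e [|? ?]]]]] //=].
move=> /andP[/and5P[/eqP Ma /eqP Mb /eqP Mc /eqP Me _]]; rewrite !andbT.
move=> /and3P[/and3P[/forallP ab /forallP ac /forallP ae] /andP[/forallP bc /forallP be]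
  /forallP ce].
have sum_6d : \sum_(i < d) (a i : nat) + \sum_(i < d) (b i : nat)
    + \sum_(i < d) (c i : nat) + \sum_(i < d) (e i : nat) = 6 * d.
  rewrite -!big_split /= (eq_bigr (fun=> 6)) => [|i _]; last first.
    by apply: sum_uniq_I4; rewrite /= !inE !negb_or ab ac ae bc be ce.
  by rewrite sum_nat_const card_ord mulnC.
have := odd_double_half d; rewrite odd_d -addnn.
lia.
Qed.

Lemma sum_if n m u v :
  \sum_(i < n) (if i < m then u else v) = u * minn m n + v * (n - m).
Proof.
elim: n => [|n IH]; first by rewrite big_ord0; lia.
by rewrite big_ord_recr /= IH; case: (ltnP n m) => nm; nia.
Qed.

Definition half_row d (u v : nat) : idx d :=
  [ffun i : 'I_d => Ordinal (ltn_pmod (if i < d./2 then u else v) (isT : 0 < 4))].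

Lemma M4_half_row d u v : ~~ odd d -> (u + v) %% 4 = 0 -> M4 d (half_row d u v).
Proof.
move=> even_d uv; rewrite /M4.
rewrite (eq_bigr (fun i : 'I_d => if i < d./2 then u %% 4 else v %% 4)); last first.
  by move=> i _; rewrite ffunE /=; case: ifP.
rewrite sum_if; have := odd_double_half d; rewrite (negbTE even_d) -addnn add0n.
move=> d_half; apply/eqP; lia.
Qed.

Lemma apart_half_row d u v u' v' :
  u %% 4 != u' %% 4 -> v %% 4 != v' %% 4 -> apart (half_row d u v) (half_row d u' v').
Proof. by move=> uu' vv'; apply/forallP => i; rewrite !ffunE; case: ifP. Qed.

Lemma M4_even_diagonal d : ~~ odd d -> has_ones_diagonal (M4 d).
Proof.
move=> even_d.
exists [:: half_row d 0 0; half_row d 1 3; half_row d 2 2; half_row d 3 1].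
by rewrite /= !M4_half_row //= !apart_half_row.
Qed.

(* x |-> (pf e x, muf e x) is a bijection from 'I_4 onto bool * bool; cell is
   its inverse. *)
Definition cell (e : 'I_3) (p m : bool) : 'I_4 :=
  Ordinal (ltn_pmod (match val e with
                     | 0 => 2 * p + m
                     | 1 => 2 * m + p
                     | _ => if p then 2 - m else 3 * m
                     end) (isT : 0 < 4)).

Lemma pf_cell e p m : pf e (cell e p m) = p.
Proof. by case: e => [[|[|[|e]]] ?] //; case: p; case: m. Qed.

Lemma muf_cell e p m : muf e (cell e p m) = m.
Proof. by case: e => [[|[|[|e]]] ?] //; case: p; case: m. Qed.

Lemma cellK e x : cell e (pf e x) (muf e x) = x.
Proof. by apply/val_inj; case: e => [[|[|[|e]]] ?] //; case: x => [[|[|[|[|x]]]] ?] //. Qed.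

Lemma eq_cell e p m p' m' : (cell e p m == cell e p' m') = (p == p') && (m == m').
Proof.
apply/eqP/andP => [eq_c | [/eqP-> /eqP->] //]; split; apply/eqP.
- by rewrite -(pf_cell e p m) eq_c pf_cell.
- by rewrite -(muf_cell e p m) eq_c muf_cell.
Qed.

Lemma xorallD d (f g : 'I_d -> bool) :
  xorall (fun i => f i (+) g i) = xorall f (+) xorall g.
Proof. exact: big_split. Qed.

Lemma xorallN d (f : 'I_d -> bool) : xorall (fun i => ~~ f i) = odd d (+) xorall f.
Proof.
rewrite /xorall (eq_bigr (fun i => true (+) f i)) => [|i _]; last by rewrite addTb.
rewrite big_split /=; congr (_ (+) _); elim: d {f} => [|d IH]; first by rewrite big_ord0.
by rewrite big_ord_recr /= IH addbT.
Qed.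

Definition ind d (k : 'I_d) (b : bool) (i : 'I_d) : bool := (i == k) && b.

Lemma xorall_ind d (k : 'I_d) b : xorall (ind k b) = b.
Proof. by rewrite /xorall (bigD1 k) //= /ind eqxx big1 ?addbF // => i /negbTE->. Qed.

Lemma xorall_card d (f : 'I_d -> bool) : xorall f = odd #|[set i | f i]|.
Proof.
rewrite -sum1dep_card big_mkcond /= (big_morph odd oddD (erefl : odd 0 = false)).
by apply: eq_bigr => i _; case: (f i).
Qed.

Section Shift.
Variables (d : nat) (E : {ffun 'I_d -> 'I_3}).

Definition shift (a : idx d) (dp dm : 'I_d -> bool) : idx d :=
  [ffun i => cell (E i) (pf (E i) (a i) (+) dp i) (muf (E i) (a i) (+) dm i)].

Lemma shift_id a dp dm : dp =1 (fun=> false) -> dm =1 (fun=> false) -> shift a dp dm = a.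
Proof. by move=> dp0 dm0; apply/ffunP => i; rewrite ffunE dp0 dm0 !addbF cellK. Qed.

Lemma apart_shift a dp dm dp' dm' :
  apart (shift a dp dm) (shift a dp' dm') = [forall i, (dp i != dp' i) || (dm i != dm' i)].
Proof.
apply: eq_forallb => i; rewrite !ffunE eq_cell negb_and.
by rewrite !(inj_eq (@addbI _)).
Qed.

Lemma pvec_shift a dp dm : pvec E (shift a dp dm) = [ffun i => pvec E a i (+) dp i].
Proof. by apply/ffunP => i; rewrite !ffunE pf_cell. Qed.

Lemma block_perm_shift lam s (a : idx d) dp dm :
  block_perm E lam s (shift a dp dm) =
  (xorall (fun i => pf (E i) (a i)) (+) xorall dp == s) &&
  (xorall (fun i => muf (E i) (a i)) (+) xorall dm (+) lam (pvec E (shift a dp dm)) == false).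
Proof.
rewrite /block_perm -!xorallD.
by congr ((_ == s) && (_ (+) _ == false)); apply: eq_bigr => i _; rewrite ffunE ?pf_cell ?muf_cell.
Qed.

Lemma block_perm_shift_toggle (k : 'I_d) lam s (a : idx d) dp dm dm' :
  xorall (fun i => pf (E i) (a i)) (+) xorall dp = s ->
  (forall i, dm' i = ind k true i (+) dm i) ->
  block_perm E lam s (shift a dp dm') = ~~ block_perm E lam s (shift a dp dm).
Proof.
move=> layer dm'E; rewrite !block_perm_shift layer eqxx !pvec_shift /=.
have -> : xorall dm' = true (+) xorall dm.
  by rewrite -[true](xorall_ind k) -xorallD; apply: eq_bigr => i _.
by rewrite addTb addbN addNb; case: (_ (+) _).
Qed.

End Shift.

Lemma exists_toggle (F : bool -> bool) : F true = ~~ F false -> exists b, F b.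
Proof. by case: (boolP (F false)) => [? _ | ? Ft]; [exists false | exists true; rewrite Ft]. Qed.

Section OddLayer.
Variables (d : nat) (E : {ffun 'I_d -> 'I_3}) (lam : {ffun 'I_d -> bool} -> bool).
Variables (s : bool) (a0 : idx d) (i0 j0 k0 : 'I_d).
Hypotheses (odd_d : odd d) (i0j0 : i0 != j0) (k0i0 : k0 != i0) (k0j0 : k0 != j0).
Hypotheses (layer_a0 : xorall (fun i => pf (E i) (a0 i)) = s)
  (a0_zero : block_perm E lam s a0 = false).

Local Notation BP := (block_perm E lam s).

(* At every coordinate the four rows realize the four distinct (p, mu)-shifts
   of a0; the bits be, ga, ph only move the mu-parity of a single row. *)
Definition row_a ph := shift E a0 (fun=> false) (ind k0 ph).
Definition row_b be := shift E a0 (fun i => ~~ ind i0 true i)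
  (fun i => ind j0 be i (+) ind i0 true i).
Definition row_c ga := shift E a0 (fun i => ~~ ind j0 true i)
  (fun i => ind i0 ga i (+) ~~ ind i0 true i).
Definition row_e be ga ph := shift E a0 (fun i => ind i0 true i (+) ind j0 true i)
  (fun i => ind k0 ph i (+) ~~ (ind i0 ga i (+) ind j0 be i)).

Lemma rows_pairwise_apart be ga ph :
  pairwise (@apart d) [:: row_a ph; row_b be; row_c ga; row_e be ga ph].
Proof.
have j0i0 : j0 != i0 by rewrite eq_sym.
have i0k0 : i0 != k0 by rewrite eq_sym.
have j0k0 : j0 != k0 by rewrite eq_sym.
rewrite /= !apart_shift !andbT.
apply/and3P; split; [apply/and3P | apply/andP |]; try split.
all: apply/forallP => i; rewrite /ind.
all: case: (eqVneq i i0) => [-> | ni0];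
  [| case: (eqVneq i j0) => [ij0 | nj0]; rewrite ?ij0;
     [| case: (eqVneq i k0) => [ik0 | nk0]; rewrite ?ik0]].
all: rewrite ?eqxx ?(negbTE i0j0) ?(negbTE j0i0) ?(negbTE k0i0) ?(negbTE i0k0)
  ?(negbTE k0j0) ?(negbTE j0k0) //=.
all: by case: ph; case: be; case: ga.
Qed.

Lemma row_a_false : row_a false = a0.
Proof. by apply: shift_id => // i; rewrite /ind andbF. Qed.

Lemma odd_layer_diagonal :
  has_ones_diagonal BP \/ has_ones_diagonal (fun a => (a == a0) || BP a).
Proof.
have xorallN_ind (k : 'I_d) : xorall (fun i => ~~ ind k true i) = false.
  by rewrite xorallN xorall_ind odd_d.
have [be BPb] : exists be, BP (row_b be).
  apply: exists_toggle; rewrite /row_b; apply: (@block_perm_shift_toggle _ _ j0).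
    by rewrite xorallN_ind addbF.
  by move=> i; rewrite /ind andbF.
have [ga BPc] : exists ga, BP (row_c ga).
  apply: exists_toggle; rewrite /row_c; apply: (@block_perm_shift_toggle _ _ i0).
    by rewrite xorallN_ind addbF.
  by move=> i; rewrite /ind andbF.
have [ph BPe] : exists ph, BP (row_e be ga ph).
  apply: exists_toggle; rewrite /row_e; apply: (@block_perm_shift_toggle _ _ k0).
    by rewrite xorallD !xorall_ind addbF.
  by move=> i; rewrite /ind andbF.
have BPa : BP (row_a true) = ~~ BP (row_a false).
  rewrite /row_a; apply: (@block_perm_shift_toggle _ _ k0).
    by rewrite [X in _ (+) X]big1 ?addbF.
  by move=> i; rewrite /ind andbF addbF.
case: ph BPe => BPe; [left | right];
  [exists [:: row_a true; row_b be; row_c ga; row_e be ga true]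
  |exists [:: row_a false; row_b be; row_c ga; row_e be ga false]];
  rewrite rows_pairwise_apart andbT /=.
- by rewrite BPa row_a_false a0_zero BPb BPc BPe.
- by rewrite row_a_false eqxx BPb BPc BPe !orbT.
Qed.
End OddLayer.

Lemma xorall_pf_subcube d (E : {ffun 'I_d -> 'I_3}) s y (a : idx d) :
  subcube E y a -> inQ s y -> xorall (fun i => pf (E i) (a i)) = s.
Proof.
move=> /eqP <- /eqP <-; rewrite xorall_card.
by apply: congr1; apply: eq_card => i; rewrite !inE ffunE.
Qed.

Theorem mainTheorem10 (d : nat) (A : mat01 d)
  (E : {ffun 'I_d -> 'I_3}) (lam : {ffun 'I_d -> bool} -> bool) (s : bool)
  (y : {ffun 'I_d -> bool}) (a0 : idx d) :
  3 <= d ->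
  equiv_mat (M4 d) A ->
  (forall a, A a = block_perm E lam s a) ->
  inQ s y ->
  subcube E y a0 ->
  A a0 = false ->
  0 < per (fun a => if a == a0 then true else A a).
Proof.
move=> d_ge3 M4A AE y_s a0y Aa0.
apply: per_gt0; first exact: leq_trans d_ge3.
have A_M4 := has_ones_diagonal_equiv M4A.
have A_B a : A a -> (if a == a0 then true else A a) by case: eqP.
have [odd_d | even_d] := boolP (odd d); last first.
  by apply: has_ones_diagonal_mono A_B _; apply/A_M4/M4_even_diagonal.
pose i0 : 'I_d := Ordinal (leq_trans (isT : 0 < 3) d_ge3).
pose j0 : 'I_d := Ordinal (leq_trans (isT : 1 < 3) d_ge3).
pose k0 : 'I_d := Ordinal (leq_trans (isT : 2 < 3) d_ge3).
have a0_zero : block_perm E lam s a0 = false by rewrite -AE.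
have [diagA | diagB] := odd_layer_diagonal (i0 := i0) (j0 := j0) (k0 := k0)
  odd_d isT isT isT (xorall_pf_subcube a0y y_s) a0_zero.
- case: (M4_odd_no_diagonal odd_d); apply/A_M4.
  by apply: has_ones_diagonal_mono diagA => a; rewrite AE.
- by apply: has_ones_diagonal_mono diagB => a; rewrite AE; case: eqP.
Qed.
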